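(* If $\mathbf A$ is a subdirectly irreducible algebra of type $F$, then every state-morphism algebra $(\mathbf A,\tau)$ is subdirectly irreducible.
   Context: A state-morphism on an algebra $\mathbf A$ of type $F$ is an endomorphism $\tau$ of $\mathbf A$ with $\tau\circ\tau=\tau$; $(\mathbf A,\tau)$ is a state-morphism algebra, i.e. the algebra of type $F$ extended by the unary operation $\tau$, and subdirect irreducibility refers to this extended algebra. *)

From mathcomp Require Import all_boot.
Set Implicit Arguments. Unset Strict Implicit. Unset Printing Implicit Defensive.

Record signature := Signature { sym : Type; arity : sym -> nat }.

Record algebra (S : signature) := Algebra {
  carrier :> Type;
  op : forall f : sym S, ('I_(arity f) -> carrier) -> carrier }.

Definition is_congruence (S : signature) (A : algebra S)
    (theta : A -> A -> Prop) : Prop :=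
  (forall a, theta a a) /\
  (forall a b, theta a b -> theta b a) /\
  (forall a b c, theta a b -> theta b c -> theta a c) /\
  (forall (f : sym S) (x y : 'I_(arity f) -> A),
      (forall i, theta (x i) (y i)) -> theta (@op S A f x) (@op S A f y)).

Definition nondiagonal (S : signature) (A : algebra S) (theta : A -> A -> Prop) :=
  exists a b : A, theta a b /\ a <> b.

Definition subdirectly_irreducible (S : signature) (A : algebra S) : Prop :=
  (exists a b : A, a <> b) /\
  exists mu : A -> A -> Prop,
    is_congruence mu /\ nondiagonal mu /\
    forall theta : A -> A -> Prop,
      is_congruence theta -> nondiagonal theta ->
      forall a b, mu a b -> theta a b.

Definition is_endomorphism (S : signature) (A : algebra S) (tau : A -> A) :=
  forall (f : sym S) (x : 'I_(arity f) -> A),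
    tau (@op S A f x) = @op S A f (fun i => tau (x i)).

Definition is_state_morphism (S : signature) (A : algebra S) (tau : A -> A) :=
  is_endomorphism tau /\ (forall a, tau (tau a) = tau a).

Definition ext_sig (S : signature) : signature :=
  Signature (fun o : option (sym S) =>
               match o with Some f => arity f | None => 1%N end).

(* The state-morphism algebra (A, tau) as an algebra of the extended type. *)
Definition sm_algebra (S : signature) (A : algebra S) (tau : A -> A)
    : algebra (ext_sig S) :=
  @Algebra (ext_sig S) (carrier A)
    (fun o => match o return ('I_(@arity (ext_sig S) o) -> carrier A) -> carrier A with
              | Some f => @op S A f
              | None => fun x => tau (x ord0)
              end).

From mathcomp Require Import all_boot.

(* A congruence of the expansion (A, tau) is in particular a congruence of A,
   so the monolith of A lies below every nondiagonal congruence of (A, tau);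
   hence the meet of those congruences is nondiagonal and is the monolith of
   (A, tau). *)

Definition nondiagonal_meet (S : signature) (B : algebra S) (x y : B) : Prop :=
  forall theta : B -> B -> Prop,
    is_congruence theta -> nondiagonal theta -> theta x y.

Lemma is_congruence_nondiagonal_meet (S : signature) (B : algebra S) :
  is_congruence (@nondiagonal_meet S B).
Proof.
split; [|split; [|split]].
- by move=> x theta [refl _].
- by move=> x y Hxy theta Htheta Hnd; case: (Htheta) => _ [symm _]; apply: symm; apply: Hxy.
- move=> x y z Hxy Hyz theta Htheta Hnd; case: (Htheta) => _ [_ [trans _]].
  exact: (trans _ y _ (Hxy _ Htheta Hnd) (Hyz _ Htheta Hnd)).
- move=> f x y Hxy theta Htheta Hnd; case: (Htheta) => _ [_ [_ compat]].
  by apply: compat => i; apply: Hxy.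
Qed.

Lemma subdirectly_irreducible_nondiagonal_meet (S : signature) (B : algebra S) :
  (exists a b : B, a <> b) -> nondiagonal (@nondiagonal_meet S B) ->
  subdirectly_irreducible B.
Proof.
move=> Bnontrivial Hnd; split=> //; exists (@nondiagonal_meet S B).
split; [exact: is_congruence_nondiagonal_meet | split=> // theta Htheta Hnd' x y].
exact.
Qed.

Lemma is_congruence_sm_algebra {S : signature} {A : algebra S} {tau : A -> A}
    {theta : A -> A -> Prop} :
  @is_congruence _ (@sm_algebra S A tau) theta -> is_congruence theta.
Proof.
move=> [refl [symm [trans compat]]]; do 3!split=> //.
by move=> f; apply: (compat (Some f)).
Qed.

Lemma sm_algebra_subdirectly_irreducible (S : signature) (A : algebra S)
    (tau : A -> A) :
  subdirectly_irreducible A -> subdirectly_irreducible (@sm_algebra S A tau).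
Proof.
move=> [Anontrivial [mu [_ [[a [b [Hmu_ab Hab]]] mu_least]]]].
apply: subdirectly_irreducible_nondiagonal_meet => //.
exists a, b; split=> // theta Htheta Hnd.
exact: (mu_least theta (is_congruence_sm_algebra Htheta) Hnd a b Hmu_ab).
Qed.

Theorem theorem4p5 (S : signature) (A : algebra S) (tau : A -> A) :
  @subdirectly_irreducible S A ->
  @is_state_morphism S A tau ->
  subdirectly_irreducible (@sm_algebra S A tau).
Proof. by move=> A_si _; apply: sm_algebra_subdirectly_irreducible. Qed.
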